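(* Suppose $\Delta(x,\varepsilon)$ is not independent of $x$. Let $r\ge1$ be the smallest index such that $\Delta_r$ is nonconstant, and put $$A(\varepsilon)=\sum_{n<r}\Delta_n\varepsilon^n,$$ a polynomial in $\varepsilon$ with constant coefficients, so that $\Delta(x,\varepsilon)=A(\varepsilon)+\Delta_r(x)\varepsilon^r+o(\varepsilon^r)$. Then, as $\varepsilon\to0$, for each $x$, $${}_qR\big(x,Y(x,\varepsilon),\varepsilon,A(\varepsilon)\big)=\frac{q(q+1)}{2}\,\Delta_r(x)\,\varepsilon^r+o(\varepsilon^r),$$ $${}_qS\big(x,Y(x,\varepsilon),\varepsilon,A(\varepsilon)\big)=q\,\Delta_r(x)\,\varepsilon^r+o(\varepsilon^r).$$
   Context: Fix integers $p$ and $q\ge1$ and put $\mu=2\pi p/q$. Let $f:\mathbb R\to\mathbb R$ be a $2\pi$-periodic real-analytic function. For real parameters $\varepsilon,\delta$ set $g(x)=-\delta-\varepsilon f(x)$ and consider the map $T_{\varepsilon,\delta}(x,y)=(x+y+\mu+g(x),\;y+g(x))$ on $\mathbb R^2$. Define ${}_nR$ and ${}_nS$ by $T^n_{\varepsilon,\delta}(x_0,y_0)=(x_0+n\mu+{}_nR,\;y_0+{}_nS)$. There exist $\bar{\bar\varepsilon},\eta>0$ and real-analytic functions $\Delta(x,\varepsilon)$ and $Y(x,\varepsilon)$, defined for $x\in\mathbb R$ and $|\varepsilon|<\bar{\bar\varepsilon}$ and vanishing at $\varepsilon=0$, such that $(\delta,y)=(\Delta(x,\varepsilon),Y(x,\varepsilon))$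 is the unique solution with $|\delta|,|y|<\eta$ of ${}_qR(x,y,\varepsilon,\delta)={}_qS(x,y,\varepsilon,\delta)=0$. Write $\Delta(x,\varepsilon)=\sum_{n\ge1}\Delta_n(x)\varepsilon^n$. *)

From Stdlib Require Import Reals.
From Coquelicot Require Import Coquelicot.
Open Scope R_scope.

Definition mu (p : Z) (q : nat) : R := 2 * PI * IZR p / INR q.

Definition Tmap (p : Z) (q : nat) (f : R -> R) (eps delta : R) (z : R * R) : R * R :=
  let g := - delta - eps * f (fst z) in
  (fst z + snd z + mu p q + g, snd z + g).

Definition nR (p : Z) (q : nat) (f : R -> R) (n : nat) (x0 y0 eps delta : R) : R :=
  fst (Nat.iter n (Tmap p q f eps delta) (x0, y0)) - x0 - INR n * mu p q.

Definition nS (p : Z) (q : nat) (f : R -> R) (n : nat) (x0 y0 eps delta : R) : R :=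
  snd (Nat.iter n (Tmap p q f eps delta) (x0, y0)) - y0.

Definition real_analytic (f : R -> R) : Prop :=
  forall x0 : R, exists rho : R, 0 < rho /\ exists a : nat -> R,
    forall x : R, Rabs (x - x0) < rho -> is_pseries a (x - x0) (f x).

Definition real_analytic2 (ebar : R) (F : R -> R -> R) : Prop :=
  forall x0 e0 : R, Rabs e0 < ebar ->
  exists rho : R, 0 < rho /\ exists a : nat -> nat -> R,
    forall x e : R, Rabs (x - x0) < rho -> Rabs (e - e0) < rho -> Rabs e < ebar ->
      (forall i : nat, ex_series (fun j => Rabs (a i j * (x - x0) ^ i * (e - e0) ^ j))) /\
      ex_series (fun i => Series (fun j => Rabs (a i j * (x - x0) ^ i * (e - e0) ^ j))) /\
      is_series (fun i => Series (fun j => a i j * (x - x0) ^ i * (e - e0) ^ j)) (F x e).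

Fixpoint psum (c : nat -> R) (r : nat) (e : R) : R :=
  match r with
  | O => 0
  | S k => psum c k e + c k * e ^ k
  end.

Definition little_o_pow (g : R -> R) (r : nat) : Prop :=
  forall c : R, 0 < c -> exists d : R, 0 < d /\
    forall e : R, 0 < Rabs e < d -> Rabs (g e) <= c * Rabs e ^ r.

From Stdlib Require Import Reals ZArith Lra Lia.
From Coquelicot Require Import Coquelicot.
Open Scope R_scope.

(* The parameter [delta] enters the map only additively:
   [T_{e,delta}] is the shear [(x, y) |-> (x + y', y')] applied after
   [y' = y - delta - e f(x)].  Hence, for two values [delta1], [delta2], the
   [q]-th iterates from a common starting point differ by [-q (delta1 - delta2)]
   in [y] and by [-q(q+1)/2 (delta1 - delta2)] in [x], up to an error
   [O(e |delta1 - delta2|)] caused by the [e f(x)] term; this needs [f] to be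
   Lipschitz, which holds because [f] is analytic and periodic.  Since
   [(Delta, Y)] solves [qR = qS = 0], comparing [delta = A(e)] with
   [delta = Delta(x, e)] and using [Delta(x, e) - A(e) = Delta_r(x) e^r +
   O(e^(r+1))] (the tail of the power series of [Delta]) gives the claim. *)

Lemma pseries_radius_gt (a : nat -> R) (rho : R) :
  (forall z, Rabs z < rho -> ex_pseries a z) ->
  forall z, Rabs z < rho -> Rbar_lt (Rabs z) (CV_radius a).
Proof.
  intros Hconv z Hz.
  set (s := (Rabs z + rho) / 2).
  assert (Hs : Rabs s < rho).
  { unfold s. rewrite Rabs_pos_eq; pose proof (Rabs_pos z); lra. }
  (* the terms of a convergent series are bounded, so [s] is below the radius *)
  assert (Hterms : exists M, forall n, Rabs (a n * s ^ n) <= M).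
  { destruct (filterlim_bounded (fun n => a n * s ^ n)) as [M HM].
    - exists 0. apply ex_series_lim_0, ex_pseries_R, Hconv, Hs.
    - exists M. exact HM. }
  destruct (CV_radius_bounded a) as [Hub _].
  pose proof (Hub s Hterms) as Hle.
  destruct (CV_radius a) as [c| |]; simpl in *; auto.
  unfold s in Hle. lra.
Qed.

Lemma locally_in_ball (x0 rho t : R) (P : R -> Prop) :
  Rabs (t - x0) < rho -> (forall s, Rabs (s - x0) < rho -> P s) -> locally t P.
Proof.
  intros Ht HP.
  assert (Hgap : 0 < rho - Rabs (t - x0)) by lra.
  exists (mkposreal _ Hgap). intros s Hs.
  change (Rabs (s - t) < rho - Rabs (t - x0)) in Hs.
  apply HP.
  replace (s - x0) with ((s - t) + (t - x0)) by ring.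
  pose proof (Rabs_triang (s - t) (t - x0)). lra.
Qed.

Lemma analytic_local_pseries (f : R -> R) : real_analytic f -> forall x0,
  exists rho a, 0 < rho /\ forall t, Rabs (t - x0) < rho ->
    Rbar_lt (Rabs (t - x0)) (CV_radius a) /\ f t = PSeries a (t - x0).
Proof.
  intros Hf x0. destruct (Hf x0) as [rho [Hrho [a Ha]]].
  exists rho, a. split; [exact Hrho|]. intros t Ht. split.
  - apply (pseries_radius_gt a rho); [|exact Ht].
    intros z Hz. exists (f (x0 + z)).
    assert (Hz' : Rabs (x0 + z - x0) < rho) by (replace (x0 + z - x0) with z by ring; exact Hz).
    pose proof (Ha _ Hz') as Hs. replace (x0 + z - x0) with z in Hs by ring. exact Hs.
  - symmetry. apply is_pseries_unique, Ha, Ht.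
Qed.

Lemma analytic_local_derive (f : R -> R) : real_analytic f -> forall x0,
  exists rho a, 0 < rho /\ forall t, Rabs (t - x0) < rho ->
    is_derive f t (PSeries (PS_derive a) (t - x0)) /\
    Rbar_lt (Rabs (t - x0)) (CV_radius (PS_derive a)).
Proof.
  intros Hf x0. destruct (analytic_local_pseries f Hf x0) as [rho [a [Hrho Ha]]].
  exists rho, a. split; [exact Hrho|]. intros t Ht.
  destruct (Ha t Ht) as [Hrad _]. split.
  - apply is_derive_ext_loc with (f := fun s => PSeries a (s - x0)).
    { apply (locally_in_ball x0 rho); [exact Ht|].
      intros s Hs. symmetry. apply Ha, Hs. }
    assert (Hshift : is_derive (fun s : R => s - x0) t 1) by (auto_derive; auto).
    pose proof (is_derive_comp (PSeries a) (fun s => s - x0) t _ _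
                  (is_derive_PSeries a (t - x0) Hrad) Hshift) as Hcomp.
    replace (PSeries (PS_derive a) (t - x0))
      with (scal 1 (PSeries (PS_derive a) (t - x0)))
      by (unfold scal; simpl; unfold mult; simpl; ring).
    exact Hcomp.
  - rewrite CV_radius_derive. exact Hrad.
Qed.

Lemma analytic_C1 (f : R -> R) : real_analytic f ->
  (forall t, ex_derive f t) /\ (forall t, continuity_pt (Derive f) t).
Proof.
  intros Hf. split; intros t;
    destruct (analytic_local_derive f Hf t) as [rho [a [Hrho Hloc]]];
    assert (Ht : Rabs (t - t) < rho) by (rewrite Rminus_diag_eq, Rabs_R0; auto).
  - eexists. apply (Hloc t Ht).
  - apply continuity_pt_ext_loc with (f := fun s => PSeries (PS_derive a) (s - t)).
    { apply (locally_in_ball t rho); [exact Ht|].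
      intros s Hs. symmetry. apply is_derive_unique, Hloc, Hs. }
    apply (continuity_pt_comp (fun s => s - t) (PSeries (PS_derive a))).
    + apply continuity_pt_minus; [apply continuity_pt_id | apply continuity_pt_const].
      intros u v; reflexivity.
    + apply PSeries_continuity, Hloc, Ht.
Qed.

(* A continuous function of period [T > 0] is bounded on the whole line: every
   point is an integer number of periods away from a point of [[0, T]]. *)
Lemma periodic_continuous_bounded (g : R -> R) (T : R) :
  0 < T -> (forall t, g (t + T) = g t) -> (forall t, continuity_pt g t) ->
  exists M, forall t, Rabs (g t) <= M.
Proof.
  intros HT Hper Hcont.
  assert (Hper_nat : forall n t, g (t + INR n * T) = g t).
  { induction n as [|n IH]; intros t.
    - simpl. f_equal. ring.
    - rewrite S_INR. replace (t + (INR n + 1) * T) with (t + INR n * T + T) by ring.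
      rewrite Hper. apply IH. }
  assert (Hper_Z : forall k t, g (t + IZR k * T) = g t).
  { intros k t. destruct (Z_le_gt_dec 0 k) as [Hk|Hk].
    - destruct (IZN k Hk) as [n ->]. rewrite <- INR_IZR_INZ. apply Hper_nat.
    - replace (IZR k) with (- INR (Z.to_nat (- k)))
        by (rewrite INR_IZR_INZ, Z2Nat.id by lia; rewrite opp_IZR; ring).
      rewrite <- (Hper_nat (Z.to_nat (- k))). f_equal. ring. }
  destruct (continuity_ab_maj (fun s => Rabs (g s)) 0 T) as [Mx [HMx _]].
  { lra. }
  { intros c _. apply (continuity_pt_comp g Rabs); [apply Hcont | apply Rcontinuity_abs]. }
  exists (Rabs (g Mx)). intros t.
  set (k := Int_part (t / T)).
  destruct (base_Int_part (t / T)) as [Hk1 Hk2]. fold k in Hk1, Hk2.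
  set (v := t - IZR k * T).
  assert (Hv : 0 <= v <= T).
  { unfold v. apply Rmult_le_compat_r with (r := T) in Hk1; [|lra].
    replace (t / T * T) with t in Hk1 by (field; lra).
    assert (IZR k * T - t > - T).
    { replace (IZR k * T - t) with ((IZR k - t / T) * T) by (field; lra).
      replace (- T) with (-1 * T) by ring. apply Rmult_gt_compat_r; lra. }
    lra. }
  replace t with (v + IZR k * T) by (unfold v; ring).
  rewrite Hper_Z. apply (HMx v Hv).
Qed.

(* A real-analytic periodic function is globally Lipschitz: its derivative is
   continuous and periodic, hence bounded, and the mean value theorem applies. *)
Lemma analytic_periodic_lipschitz (f : R -> R) (T : R) :
  0 < T -> real_analytic f -> (forall x, f (x + T) = f x) ->
  exists L, 0 <= L /\ forall a b, Rabs (f a - f b) <= L * Rabs (a - b).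
Proof.
  intros HT Hf Hper. destruct (analytic_C1 f Hf) as [Hd Hc].
  assert (Hper' : forall t, Derive f (t + T) = Derive f t).
  { intros t.
    assert (Hshift : Derive (fun s => f (s + T)) t = Derive f (t + T)).
    { rewrite Derive_comp by (apply Hd || auto_derive; auto).
      replace (Derive (fun s => s + T) t) with 1
        by (symmetry; apply is_derive_unique; auto_derive; auto).
      ring. }
    rewrite <- Hshift. apply Derive_ext. intros s. apply Hper. }
  destruct (periodic_continuous_bounded (Derive f) T HT Hper' Hc) as [L HL].
  exists L. split; [apply Rle_trans with (2 := HL 0); apply Rabs_pos|].
  intros a b.
  destruct (MVT_gen f b a (Derive f)) as [c [_ Hmvt]].
  - intros t _. apply Derive_correct, Hd.
  - intros t _. apply continuity_pt_filterlim.
    exact (ex_derive_continuous (K := R_AbsRing) (V := R_NormedModule) f t (Hd t)).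
  - rewrite Hmvt, Rabs_mult. apply Rmult_le_compat_r; [apply Rabs_pos | apply HL].
Qed.

(* One step of the error recursion for two orbits with parameters [delta1],
   [delta2], [D = delta1 - delta2].  After [n] steps the coordinate differences
   are [da ~ -K D] and [db ~ -n D] (with [K = n(n+1)/2]) up to errors [da + K D], [Eb]
   of size [O(e D)]; one more step adds [-e (f a1 - f a2)] to [Eb], and the new
   [Eb] to [da + K D]. *)
Lemma perturbation_step (L Ca Cb K e D da Eb dfa : R) :
  0 <= L -> 0 <= Ca -> 0 <= K -> Rabs e <= 1 ->
  Rabs (da + K * D) <= Ca * Rabs e * Rabs D ->
  Rabs Eb <= Cb * Rabs e * Rabs D ->
  Rabs dfa <= L * Rabs da ->
  Rabs (Eb - e * dfa) <= (Cb + L * (Ca + K)) * Rabs e * Rabs D /\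
  Rabs (da + K * D + (Eb - e * dfa))
    <= (Ca + (Cb + L * (Ca + K))) * Rabs e * Rabs D.
Proof.
  intros HL HCa HK He Hda HEb Hdfa.
  pose proof (Rabs_pos e) as He0. pose proof (Rabs_pos D) as HD0.
  assert (Hda' : Rabs da <= (Ca + K) * Rabs D).
  { pose proof (Rabs_triang (da + K * D) (- (K * D))) as Htri.
    replace (da + K * D + - (K * D)) with da in Htri by ring.
    rewrite Rabs_Ropp, Rabs_mult, (Rabs_pos_eq K HK) in Htri.
    assert (Ca * Rabs e * Rabs D <= Ca * Rabs D).
    { rewrite Rmult_assoc, (Rmult_comm (Rabs e)), <- Rmult_assoc.
      rewrite <- (Rmult_1_r (Ca * Rabs D)) at 2.
      apply Rmult_le_compat_l; [apply Rmult_le_pos|]; assumption. }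
    lra. }
  assert (Hedfa : Rabs (e * dfa) <= L * (Ca + K) * Rabs e * Rabs D).
  { rewrite Rabs_mult.
    apply Rle_trans with (Rabs e * (L * ((Ca + K) * Rabs D))); [|lra].
    apply Rmult_le_compat_l; [exact He0|].
    apply Rle_trans with (1 := Hdfa). apply Rmult_le_compat_l; assumption. }
  assert (HEb' : Rabs (Eb - e * dfa) <= (Cb + L * (Ca + K)) * Rabs e * Rabs D).
  { unfold Rminus. eapply Rle_trans; [apply Rabs_triang|].
    rewrite Rabs_Ropp. lra. }
  split; [exact HEb'|].
  eapply Rle_trans; [apply Rabs_triang|]. lra.
Qed.

(* The [n]-th iterate depends on [delta] like the unperturbed shear, up to
   [O(e |delta1 - delta2|)]: changing [delta] by [D] shifts [y] by [-n D] and
   [x] by [-n(n+1)/2 D] (the shear accumulates the [y]-shifts). *)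
Lemma iterate_delta_perturbation (p : Z) (q : nat) (f : R -> R) (L : R) :
  0 <= L -> (forall a b, Rabs (f a - f b) <= L * Rabs (a - b)) ->
  forall n, exists Ca Cb, 0 <= Ca /\ 0 <= Cb /\
  forall x0 y0 e d1 d2, Rabs e <= 1 ->
    Rabs (snd (Nat.iter n (Tmap p q f e d1) (x0, y0))
          - snd (Nat.iter n (Tmap p q f e d2) (x0, y0))
          + INR n * (d1 - d2)) <= Cb * Rabs e * Rabs (d1 - d2) /\
    Rabs (fst (Nat.iter n (Tmap p q f e d1) (x0, y0))
          - fst (Nat.iter n (Tmap p q f e d2) (x0, y0))
          + INR n * (INR n + 1) / 2 * (d1 - d2)) <= Ca * Rabs e * Rabs (d1 - d2).
Proof.
  intros HL Hlip n. induction n as [|n IH].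
  { exists 0, 0. split; [lra|split; [lra|]]. intros x0 y0 e d1 d2 _. simpl.
    split; [replace (y0 - y0 + 0 * (d1 - d2)) with 0 by ring
           |replace (x0 - x0 + 0 * (0 + 1) / 2 * (d1 - d2)) with 0 by field];
      rewrite Rabs_R0; lra. }
  destruct IH as [Ca [Cb [HCa [HCb IH]]]].
  set (K := INR n * (INR n + 1) / 2).
  assert (HK : 0 <= K) by (unfold K; pose proof (pos_INR n); nra).
  exists (Ca + (Cb + L * (Ca + K))), (Cb + L * (Ca + K)).
  split; [nra|split; [nra|]].
  intros x0 y0 e d1 d2 He. destruct (IH x0 y0 e d1 d2 He) as [Hb Ha].
  rewrite !Nat.iter_succ.
  destruct (Nat.iter n (Tmap p q f e d1) (x0, y0)) as [a1 b1].
  destruct (Nat.iter n (Tmap p q f e d2) (x0, y0)) as [a2 b2].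
  cbn [fst snd] in Ha, Hb |- *. unfold Tmap; cbn [fst snd].
  destruct (perturbation_step L Ca Cb K e (d1 - d2) (a1 - a2)
              (b1 - b2 + INR n * (d1 - d2)) (f a1 - f a2) HL HCa HK He Ha Hb
              (Hlip a1 a2)) as [Hsnd Hfst].
  rewrite S_INR. split.
  - replace (b1 + (- d1 - e * f a1) - (b2 + (- d2 - e * f a2)) + (INR n + 1) * (d1 - d2))
      with (b1 - b2 + INR n * (d1 - d2) - e * (f a1 - f a2)) by ring.
    exact Hsnd.
  - replace (a1 + b1 + mu p q + (- d1 - e * f a1) - (a2 + b2 + mu p q + (- d2 - e * f a2))
             + (INR n + 1) * (INR n + 1 + 1) / 2 * (d1 - d2))
      with (a1 - a2 + K * (d1 - d2) + (b1 - b2 + INR n * (d1 - d2) - e * (f a1 - f a2)))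
      by (unfold K; field).
    exact Hfst.
Qed.

Lemma nRS_delta_perturbation (p : Z) (q : nat) (f : R -> R) (L : R) (n : nat) :
  0 <= L -> (forall a b, Rabs (f a - f b) <= L * Rabs (a - b)) ->
  exists Ca Cb, 0 <= Ca /\ 0 <= Cb /\
  forall x0 y0 e d1 d2, Rabs e <= 1 ->
    Rabs (nS p q f n x0 y0 e d1 - nS p q f n x0 y0 e d2 + INR n * (d1 - d2))
      <= Cb * Rabs e * Rabs (d1 - d2) /\
    Rabs (nR p q f n x0 y0 e d1 - nR p q f n x0 y0 e d2
          + INR n * (INR n + 1) / 2 * (d1 - d2)) <= Ca * Rabs e * Rabs (d1 - d2).
Proof.
  intros HL Hlip.
  destruct (iterate_delta_perturbation p q f L HL Hlip n) as [Ca [Cb [HCa [HCb Hit]]]].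
  exists Ca, Cb. split; [exact HCa|split; [exact HCb|]].
  intros x0 y0 e d1 d2 He. unfold nR, nS.
  destruct (Hit x0 y0 e d1 d2 He) as [Hsnd Hfst].
  set (z1 := Nat.iter n (Tmap p q f e d1) (x0, y0)) in *.
  set (z2 := Nat.iter n (Tmap p q f e d2) (x0, y0)) in *.
  split.
  - replace (snd z1 - y0 - (snd z2 - y0)) with (snd z1 - snd z2) by ring. exact Hsnd.
  - replace (fst z1 - x0 - INR n * mu p q - (fst z2 - x0 - INR n * mu p q))
      with (fst z1 - fst z2) by ring.
    exact Hfst.
Qed.

Lemma psum_sum_f_R0 (c : nat -> R) (e : R) (n : nat) :
  sum_f_R0 (fun k => c k * e ^ k) n = psum c (S n) e.
Proof. induction n as [|n IH]; simpl in *; [ring | rewrite IH; ring]. Qed.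

Lemma psum_ext (c c' : nat -> R) (e : R) (r : nat) :
  (forall n, (n < r)%nat -> c n = c' n) -> psum c r e = psum c' r e.
Proof.
  induction r as [|r IH]; intros Hcc; simpl; [reflexivity|].
  rewrite IH, Hcc; [reflexivity | lia | intros k Hk; apply Hcc; lia].
Qed.

Lemma CV_radius_decr_n (a : nat -> R) (n : nat) :
  CV_radius (PS_decr_n a n) = CV_radius a.
Proof.
  induction n as [|n IH].
  - apply CV_radius_ext. intros k. reflexivity.
  - rewrite <- IH, <- (CV_radius_decr_1 (PS_decr_n a n)).
    apply CV_radius_ext. intros k. unfold PS_decr_n, PS_decr_1. f_equal. lia.
Qed.

Lemma pseries_remainder (c : nat -> R) (F : R -> R) (rho : R) (n : nat) :
  0 < rho -> (forall e, Rabs e < rho -> is_pseries c e (F e)) ->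
  exists d K, 0 < d /\ 0 <= K /\ forall e, Rabs e < d ->
    Rabs (F e - psum c (S n) e) <= K * Rabs e ^ S n.
Proof.
  intros Hrho Hc.
  assert (Hrad : forall e, Rabs e < rho -> Rbar_lt (Rabs e) (CV_radius c)).
  { apply pseries_radius_gt. intros z Hz. eexists. apply (Hc z Hz). }
  (* the tail [b] is a power series converging near [0], hence bounded there *)
  set (b := PS_decr_n c (S n)).
  assert (Hcont : continuity_pt (PSeries b) 0).
  { apply PSeries_continuity. unfold b. rewrite CV_radius_decr_n.
    apply Hrad. rewrite Rabs_R0. exact Hrho. }
  destruct (proj1 (continuity_pt_locally _ _) Hcont (mkposreal 1 Rlt_0_1)) as [d1 Hd1].
  exists (Rmin d1 rho), (Rabs (PSeries b 0) + 1).
  split; [apply Rmin_glb_lt; [apply cond_pos | exact Hrho]|].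
  split; [pose proof (Rabs_pos (PSeries b 0)); lra|].
  intros e He.
  assert (He1 : Rabs e < d1) by (eapply Rlt_le_trans; [exact He | apply Rmin_l]).
  assert (He2 : Rabs e < rho) by (eapply Rlt_le_trans; [exact He | apply Rmin_r]).
  assert (Hbound : Rabs (PSeries b e) <= Rabs (PSeries b 0) + 1).
  { assert (Hnear : Rabs (PSeries b e - PSeries b 0) < 1).
    { apply Hd1. change (Rabs (e - 0) < d1). rewrite Rminus_0_r. exact He1. }
    pose proof (Rabs_triang (PSeries b e - PSeries b 0) (PSeries b 0)) as Htri.
    replace (PSeries b e - PSeries b 0 + PSeries b 0) with (PSeries b e) in Htri by ring.
    lra. }
  assert (Hsplit : F e - psum c (S n) e = e ^ S n * PSeries b e).
  { rewrite <- (is_pseries_unique _ _ _ (Hc e He2)).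
    rewrite (PSeries_decr_n c n e (CV_radius_inside c e (Hrad e He2))).
    rewrite psum_sum_f_R0. fold b. ring. }
  rewrite Hsplit, Rabs_mult, <- RPow_abs, Rmult_comm.
  apply Rmult_le_compat_r; [apply pow_le, Rabs_pos | exact Hbound].
Qed.

Lemma little_o_of_big_O (g : R -> R) (r : nat) (C d : R) : 0 < d ->
  (forall e, Rabs e < d -> Rabs (g e) <= C * Rabs e ^ S r) ->
  little_o_pow g r.
Proof.
  intros Hd Hg c Hc.
  set (C' := Rabs C + 1).
  assert (HC' : 0 < C') by (unfold C'; pose proof (Rabs_pos C); lra).
  exists (Rmin d (c / C')). split.
  { apply Rmin_glb_lt; [exact Hd | apply Rdiv_lt_0_compat; assumption]. }
  intros e [_ He].
  assert (Hed : Rabs e < d) by (eapply Rlt_le_trans; [exact He | apply Rmin_l]).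
  assert (Hec : Rabs e * C' < c).
  { assert (Rabs e < c / C') by (eapply Rlt_le_trans; [exact He | apply Rmin_r]).
    apply Rmult_lt_compat_r with (r := C') in H; [|exact HC'].
    replace (c / C' * C') with c in H by (field; lra). exact H. }
  pose proof (pow_le (Rabs e) r (Rabs_pos e)) as Hpow.
  pose proof (Rabs_pos e) as He0.
  assert (HCe : C * Rabs e <= c).
  { pose proof (Rle_abs C). assert (C * Rabs e <= C' * Rabs e).
    { apply Rmult_le_compat_r; [exact He0 | unfold C'; lra]. }
    lra. }
  apply Rle_trans with (1 := Hg e Hed). simpl. rewrite <- Rmult_assoc.
  apply Rmult_le_compat_r; assumption.
Qed.

Lemma linear_response_little_o (u D A : R -> R) (K Cx Dl Kr d : R) (r : nat) :
  0 < d -> d <= 1 -> 0 <= K -> 0 <= Cx -> 0 <= Kr ->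
  (forall e, Rabs e < d ->
     Rabs (u e + K * (A e - D e)) <= Cx * Rabs e * Rabs (A e - D e)) ->
  (forall e, Rabs e < d -> Rabs (D e - A e - Dl * e ^ r) <= Kr * Rabs e ^ S r) ->
  little_o_pow (fun e => u e - K * Dl * e ^ r) r.
Proof.
  intros Hd Hd1 HK HCx HKr Hresp Hexp.
  apply (little_o_of_big_O _ r (Cx * (Rabs Dl + Kr) + K * Kr) d Hd).
  intros e He. specialize (Hresp e He). specialize (Hexp e He).
  set (E := Rabs e) in *. set (Er := Rabs e ^ r) in *.
  assert (HE : 0 <= E <= 1) by (split; [apply Rabs_pos | lra]).
  assert (HEr : 0 <= Er) by apply pow_le, Rabs_pos.
  assert (HeSr : E ^ S r = E * Er) by reflexivity.
  rewrite HeSr in Hexp |- *.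
  assert (Her : Rabs (Dl * e ^ r) = Rabs Dl * Er)
    by (unfold Er; rewrite Rabs_mult, RPow_abs; reflexivity).
  assert (Hpert : Rabs (A e - D e) <= (Rabs Dl + Kr) * Er).
  { pose proof (Rabs_triang (D e - A e - Dl * e ^ r) (Dl * e ^ r)) as Htri.
    replace (D e - A e - Dl * e ^ r + Dl * e ^ r) with (- (A e - D e)) in Htri by ring.
    rewrite Rabs_Ropp, Her in Htri.
    assert (Kr * (E * Er) <= Kr * Er).
    { apply Rmult_le_compat_l; [exact HKr|].
      rewrite <- (Rmult_1_l Er) at 2. apply Rmult_le_compat_r; lra. }
    lra. }
  replace (u e - K * Dl * e ^ r)
    with ((u e + K * (A e - D e)) + K * (D e - A e - Dl * e ^ r)) by ring.
  eapply Rle_trans; [apply Rabs_triang|].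
  rewrite Rabs_mult, (Rabs_pos_eq K HK).
  assert (Cx * E * Rabs (A e - D e) <= Cx * E * ((Rabs Dl + Kr) * Er))
    by (apply Rmult_le_compat_l; [apply Rmult_le_pos|]; lra).
  assert (K * Rabs (D e - A e - Dl * e ^ r) <= K * (Kr * (E * Er)))
    by (apply Rmult_le_compat_l; lra).
  nra.
Qed.

Theorem mainTheorem7
  (p : Z) (q : nat) (f : R -> R)
  (ebar eta : R) (Delta Y : R -> R -> R) (Deltan : nat -> R -> R) (r : nat) :
  (1 <= q)%nat ->
  (forall x : R, f (x + 2 * PI) = f x) ->
  real_analytic f ->
  0 < ebar -> 0 < eta ->
  real_analytic2 ebar Delta ->
  real_analytic2 ebar Y ->
  (forall x : R, Delta x 0 = 0 /\ Y x 0 = 0) ->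
  (* (Delta, Y) is the unique small solution of qR = qS = 0 *)
  (forall x eps : R, Rabs eps < ebar ->
     Rabs (Delta x eps) < eta /\ Rabs (Y x eps) < eta /\
     nR p q f q x (Y x eps) eps (Delta x eps) = 0 /\
     nS p q f q x (Y x eps) eps (Delta x eps) = 0 /\
     (forall delta y : R, Rabs delta < eta -> Rabs y < eta ->
        nR p q f q x y eps delta = 0 -> nS p q f q x y eps delta = 0 ->
        delta = Delta x eps /\ y = Y x eps)) ->
  (* Delta(x, eps) = sum_n Deltan n x * eps^n *)
  (forall x : R, exists rho : R, 0 < rho /\
     forall e : R, Rabs e < rho -> is_pseries (fun n => Deltan n x) e (Delta x e)) ->
  (* Delta is not independent of x *)
  (exists x1 x2 e : R, Rabs e < ebar /\ Delta x1 e <> Delta x2 e) ->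
  (* r >= 1 is the smallest index with Deltan r nonconstant *)
  (1 <= r)%nat ->
  (exists x1 x2 : R, Deltan r x1 <> Deltan r x2) ->
  (forall n : nat, (n < r)%nat -> forall x1 x2 : R, Deltan n x1 = Deltan n x2) ->
  let A := fun e : R => psum (fun n => Deltan n 0) r e in
  forall x : R,
    little_o_pow (fun e => nR p q f q x (Y x e) e (A e)
                           - INR q * (INR q + 1) / 2 * Deltan r x * e ^ r) r /\
    little_o_pow (fun e => nS p q f q x (Y x e) e (A e)
                           - INR q * Deltan r x * e ^ r) r.
Proof.
  intros _ Hper Hf Hebar _ _ _ _ Hsol Hseries _ _ _ Hconst A x.
  assert (H2PI : 0 < 2 * PI) by (pose proof PI_RGT_0; lra).
  destruct (analytic_periodic_lipschitz f (2 * PI) H2PI Hf Hper) as [L [HL Hlip]].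
  destruct (nRS_delta_perturbation p q f L q HL Hlip) as [Ca [Cb [HCa [HCb Hpert]]]].
  destruct (Hseries x) as [rho [Hrho Hrho_series]].
  destruct (pseries_remainder _ _ rho r Hrho Hrho_series) as [d [Kr [Hd [HKr Hrem]]]].
  assert (Hexpand : forall e, Rabs e < d ->
            Rabs (Delta x e - A e - Deltan r x * e ^ r) <= Kr * Rabs e ^ S r).
  { intros e He. replace (A e) with (psum (fun n => Deltan n x) r e).
    - replace (Delta x e - psum (fun n => Deltan n x) r e - Deltan r x * e ^ r)
        with (Delta x e - psum (fun n => Deltan n x) (S r) e) by (simpl; ring).
      apply Hrem, He.
    - apply psum_ext. intros n Hn. apply Hconst, Hn. }
  set (d0 := Rmin d (Rmin 1 ebar)).
  assert (Hd0 : 0 < d0) by (repeat apply Rmin_glb_lt; lra).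
  assert (Hsmall : forall e, Rabs e < d0 -> Rabs e < d /\ Rabs e <= 1 /\ Rabs e < ebar).
  { intros e He. unfold d0 in He.
    pose proof (Rmin_l d (Rmin 1 ebar)). pose proof (Rmin_r d (Rmin 1 ebar)).
    pose proof (Rmin_l 1 ebar). pose proof (Rmin_r 1 ebar). lra. }
  assert (Hd01 : d0 <= 1) by (unfold d0; pose proof (Rmin_r d (Rmin 1 ebar));
                              pose proof (Rmin_l 1 ebar); lra).
  pose proof (pos_INR q) as Hq.
  (* at delta = Delta(x, e) both displacements vanish, so at delta = A(e) they
     are the linear responses to the perturbation A(e) - Delta(x, e) *)
  split.
  - apply (linear_response_little_o _ (Delta x) A _ Ca _ Kr d0 r Hd0 Hd01);
      [nra | exact HCa | exact HKr | | intros e He; apply Hexpand, Hsmall, He].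
    intros e He. destruct (Hsmall e He) as [_ [He1 Hebar']].
    destruct (Hsol x e Hebar') as [_ [_ [HR _]]].
    destruct (Hpert x (Y x e) e (A e) (Delta x e) He1) as [_ Hfst].
    rewrite HR, Rminus_0_r in Hfst. exact Hfst.
  - apply (linear_response_little_o _ (Delta x) A _ Cb _ Kr d0 r Hd0 Hd01);
      [exact Hq | exact HCb | exact HKr | | intros e He; apply Hexpand, Hsmall, He].
    intros e He. destruct (Hsmall e He) as [_ [He1 Hebar']].
    destruct (Hsol x e Hebar') as [_ [_ [_ [HS _]]]].
    destruct (Hpert x (Y x e) e (A e) (Delta x e) He1) as [Hsnd _].
    rewrite HS, Rminus_0_r in Hsnd. exact Hsnd.
Qed.
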